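(* Let $\alpha\in[0,1)$, let $r>1/2$, and let $$X(\sqrt{t},\alpha)=\{\sqrt{n}\,e^{2\pi i n\alpha}\ :\ n\in\mathbb{N}\}\subset\mathbb{C}.$$ Consider, for a real number $m$ and $\beta\in[0,1)$, the system $$m-3r\sqrt{m}\le n\le m+3r\sqrt{m},\qquad \|n\alpha-\beta\|\le \frac{r}{2\sqrt{m}}\qquad (\ast)$$ in the unknown $n\in\mathbb{N}$. If $X(\sqrt{t},\alpha)$ is $r$-relatively dense, then for every real $m\ge16r^2$ and every $\beta\in[0,1)$ the system $(\ast)$ has a solution $n\in\mathbb{N}$. Conversely, if $(\ast)$ has a solution $n\in\mathbb{N}$ for every real $m\ge16r^2$ and every $\beta\in[0,1)$, then $X(\sqrt{t},\alpha)$ is $6r$-relatively dense.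
   Context: $\|x\|=\min_{i\in\mathbb{Z}}|x-i|$ denotes the distance from $x$ to the nearest integer. $B(x,r)$ denotes the open disk in $\mathbb{C}$ of radius $r$ centered at $x$. A set $X\subset\mathbb{C}$ is $r$-relatively dense if $B(x,r)\cap X\neq\emptyset$ for every $x\in\mathbb{C}$. *)

From Stdlib Require Import Reals.
From Coquelicot Require Import Coquelicot.
Open Scope R_scope.

(* ||x|| = distance from x to the nearest integer = min(frac x, 1 - frac x). *)
Definition dist_int (x : R) : R := Rmin (frac_part x) (1 - frac_part x).

Definition cexpi (theta : R) : C := (cos theta, sin theta).

Definition Xpt (alpha : R) (n : nat) : C :=
  Cmult (RtoC (sqrt (INR n))) (cexpi (2 * PI * INR n * alpha)).

Definition Xset (alpha : R) (z : C) : Prop :=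
  exists n : nat, (1 <= n)%nat /\ z = Xpt alpha n.

Definition rel_dense (X : C -> Prop) (r : R) : Prop :=
  forall x : C, exists y : C, X y /\ Cmod (Cminus y x) < r.

Definition system (alpha r m beta : R) (n : nat) : Prop :=
  m - 3 * r * sqrt m <= INR n <= m + 3 * r * sqrt m /\
  dist_int (INR n * alpha - beta) <= r / (2 * sqrt m).

(* By the law of cosines,
     |sqrt n e^{2 pi i n alpha} - rho e^{2 pi i beta}|^2
       = (sqrt n - rho)^2 + 4 sqrt n rho sin^2 (pi ||n alpha - beta||),
   and 4d/3 <= sin (pi d) <= 4d on [0, 1/2].  Hence a point of X within r of
   sqrt m e^{2 pi i beta} satisfies |sqrt n - sqrt m| < r and
   ||n alpha - beta|| < r / (2 sqrt m), i.e. solves the system; conversely, writing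
   x = rho e^{2 pi i beta}, a solution of the system for m = max (rho, 4r)^2 gives a
   point of X within 6r of x. *)
From Stdlib Require Import Reals Lra Psatz.
From Coquelicot Require Import Coquelicot.
Open Scope R_scope.

Lemma sin_add_IZR_mul_PI_sqr (x : R) (k : Z) : sin (x + IZR k * PI) ^ 2 = sin x ^ 2.
Proof.
  assert (sin_kPI : sin (IZR k * PI) = 0) by (apply sin_eq_0_1; exists k; reflexivity).
  assert (cos_kPI : cos (IZR k * PI) ^ 2 = 1).
  { pose proof (sin2_cos2 (IZR k * PI)) as E. rewrite sin_kPI in E. unfold Rsqr in E. nra. }
  rewrite sin_plus, sin_kPI. nra.
Qed.

Lemma dist_int_bound (t : R) : 0 <= dist_int t <= 1 / 2.
Proof.
  pose proof (base_fp t).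
  unfold dist_int, Rmin. destruct Rle_dec; lra.
Qed.

Lemma sin_PI_mul_dist_int_sqr (t : R) : sin (PI * t) ^ 2 = sin (PI * dist_int t) ^ 2.
Proof.
  assert (sin_frac : sin (PI * t) ^ 2 = sin (PI * frac_part t) ^ 2).
  { rewrite <- (sin_add_IZR_mul_PI_sqr (PI * frac_part t) (Int_part t)).
    unfold frac_part. replace (PI * (t - IZR (Int_part t)) + IZR (Int_part t) * PI)
      with (PI * t) by ring. reflexivity. }
  rewrite sin_frac. unfold dist_int, Rmin. destruct Rle_dec; [reflexivity|].
  replace (PI * (1 - frac_part t)) with (PI - PI * frac_part t) by ring.
  rewrite sin_PI_x. reflexivity.
Qed.

Lemma sin_ge_cubic (x : R) : 0 <= x <= PI -> x - x ^ 3 / 6 <= sin x.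
Proof.
  intros Hx. pose proof PI_4.
  destruct (SIN x) as [Hlb _]; try lra.
  eapply Rle_trans; [|exact Hlb].
  unfold sin_lb, sin_approx, sin_term. cbn [sum_f_R0]. rewrite !INR_IZR_INZ. simpl.
  (* the two extra terms x^5/120 - x^7/5040 of [sin_lb] have a nonnegative sum *)
  assert (0 <= x ^ 5 * (42 - x ^ 2)) by (apply Rmult_le_pos; [apply pow_le|]; nra).
  nra.
Qed.

(* Any constant above 2 / sqrt 3 would do for [system_of_close]. *)
Lemma sin_PI_mul_lower (d : R) : 0 <= d <= 1 / 2 -> 4 / 3 * d <= sin (PI * d).
Proof.
  intros Hd. pose proof PI2_3_2. pose proof PI_4.
  eapply Rle_trans; [|apply sin_ge_cubic; nra].
  assert (4 / 3 <= PI - PI ^ 3 / 24).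
  { assert (0 <= (4 - PI) * (PI ^ 2 + 4 * PI - 8)) by (apply Rmult_le_pos; nra).
    replace ((4 - PI) * (PI ^ 2 + 4 * PI - 8)) with (24 * (PI - PI ^ 3 / 24 - 4 / 3)) in * by field.
    lra. }
  assert (PI ^ 3 * d ^ 2 <= PI ^ 3 / 4).
  { assert (d ^ 2 <= 1 / 4) by nra.
    assert (0 <= PI ^ 3) by (apply pow_le; lra).
    replace (PI ^ 3 / 4) with (PI ^ 3 * (1 / 4)) by field.
    apply Rmult_le_compat_l; assumption. }
  nra.
Qed.

Lemma sin_PI_mul_upper (d : R) : 0 <= d -> sin (PI * d) <= 4 * d.
Proof.
  intros Hd. pose proof PI_RGT_0. pose proof PI_4.
  destruct (Req_dec d 0) as [->|Hd0].
  - rewrite Rmult_0_r, sin_0. lra.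
  - assert (sin (PI * d) < PI * d) by (apply sin_lt_x; nra). nra.
Qed.

Lemma Cmod_sub_polar_sqr (r1 r2 t1 t2 : R) :
  Cmod (Cminus (Cmult (RtoC r1) (cexpi t1)) (Cmult (RtoC r2) (cexpi t2))) ^ 2 =
  (r1 - r2) ^ 2 + 4 * r1 * r2 * sin ((t1 - t2) / 2) ^ 2.
Proof.
  rewrite Cmod2_alt. unfold cexpi, Cminus, Cmult, Cplus, Copp, RtoC, Re, Im. simpl.
  assert (Hcos : cos (t1 - t2) = 1 - 2 * sin ((t1 - t2) / 2) ^ 2).
  { set (h := (t1 - t2) / 2). replace (t1 - t2) with (2 * h) by (unfold h; field).
    rewrite cos_2a_sin. ring. }
  rewrite cos_minus in Hcos.
  pose proof (sin2_cos2 t1) as H1. pose proof (sin2_cos2 t2) as H2. unfold Rsqr in H1, H2.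
  transitivity (r1 ^ 2 * (sin t1 * sin t1 + cos t1 * cos t1)
    + r2 ^ 2 * (sin t2 * sin t2 + cos t2 * cos t2)
    - 2 * r1 * r2 * (cos t1 * cos t2 + sin t1 * sin t2)); [ring|].
  rewrite H1, H2, Hcos. ring.
Qed.

Definition polar (rho beta : R) : C := Cmult (RtoC rho) (cexpi (2 * PI * beta)).

Lemma Cmod_Xpt_sub_polar_sqr (alpha rho beta : R) (n : nat) :
  Cmod (Cminus (Xpt alpha n) (polar rho beta)) ^ 2 =
  (sqrt (INR n) - rho) ^ 2 + 4 * sqrt (INR n) * rho * sin (PI * dist_int (INR n * alpha - beta)) ^ 2.
Proof.
  unfold Xpt, polar. rewrite Cmod_sub_polar_sqr, <- sin_PI_mul_dist_int_sqr.
  replace ((2 * PI * INR n * alpha - 2 * PI * beta) / 2) with (PI * (INR n * alpha - beta))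
    by field.
  reflexivity.
Qed.

Lemma unit_circle_angle (c s : R) : c ^ 2 + s ^ 2 = 1 ->
  exists theta, 0 <= theta < 2 * PI /\ cos theta = c /\ sin theta = s.
Proof.
  intros Hcs. pose proof PI_RGT_0.
  assert (Hc : -1 <= c <= 1) by nra.
  pose proof (acos_bound c) as Ht.
  assert (Hcos : cos (acos c) = c) by (apply cos_acos; exact Hc).
  assert (Hsin : sin (acos c) = Rabs s).
  { rewrite sin_acos by exact Hc. rewrite <- sqrt_Rsqr_abs. f_equal. unfold Rsqr. nra. }
  destruct (Rle_lt_dec 0 s) as [Hs|Hs].
  - exists (acos c). rewrite Rabs_pos_eq in Hsin by exact Hs. repeat split; lra.
  - assert (Hpos : 0 < acos c).
    { destruct (Req_dec (acos c) 0) as [E|E]; [|lra].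
      rewrite E, sin_0, Rabs_left in Hsin by exact Hs. lra. }
    exists (2 * PI - acos c).
    rewrite cos_minus, sin_minus, cos_2PI, sin_2PI, Hcos, Hsin, Rabs_left by exact Hs.
    repeat split; lra.
Qed.

Lemma polar_decomposition (x : C) : exists beta, 0 <= beta < 1 /\ x = polar (Cmod x) beta.
Proof.
  pose proof PI_RGT_0.
  destruct x as [a b]. unfold polar, cexpi, Cmult, RtoC. simpl.
  pose proof (Cmod2_alt (a, b)) as Hmod. unfold Re, Im in Hmod. cbn [fst snd] in Hmod.
  set (rho := Cmod (a, b)) in *.
  destruct (Req_dec rho 0) as [H0|H0].
  - exists 0. split; [lra|]. rewrite H0 in *. f_equal; nra.
  - destruct (unit_circle_angle (a / rho) (b / rho)) as [theta [Htheta [Hc Hs]]].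
    { replace ((a / rho) ^ 2 + (b / rho) ^ 2) with ((a ^ 2 + b ^ 2) / rho ^ 2) by (field; lra).
      rewrite <- Hmod. field. lra. }
    exists (theta / (2 * PI)). split.
    + split; [apply Rdiv_le_0_compat; lra|].
      apply (Rmult_lt_reg_r (2 * PI)); [lra|]. field_simplify; lra.
    + replace (2 * PI * (theta / (2 * PI))) with theta by (field; lra).
      rewrite Hc, Hs. f_equal; field; lra.
Qed.

Section Directions.

Variables alpha r : R.
Hypothesis r_gt0 : 0 < r.

Lemma system_of_close (q beta : R) (n : nat) : 4 * r <= q ->
  Cmod (Cminus (Xpt alpha n) (polar q beta)) < r -> system alpha r (q ^ 2) beta n.
Proof.
  intros Hq Hclose.
  pose proof (Cmod_ge_0 (Cminus (Xpt alpha n) (polar q beta))).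
  assert (Hsum : Cmod (Cminus (Xpt alpha n) (polar q beta)) ^ 2 < r ^ 2) by nra.
  rewrite Cmod_Xpt_sub_polar_sqr in Hsum.
  pose proof (sqrt_pos (INR n)). pose proof (pow2_sqrt _ (pos_INR n)) as Hn.
  pose proof (dist_int_bound (INR n * alpha - beta)) as Hd.
  pose proof (sin_PI_mul_lower _ Hd) as Hsin.
  unfold system. rewrite sqrt_pow2 by lra.
  set (s := sqrt (INR n)) in *. set (d := dist_int (INR n * alpha - beta)) in *.
  set (T := sin (PI * d)) in *.
  assert (0 <= 4 * s * q * T ^ 2) by (apply Rmult_le_pos; [|apply pow2_ge_0]; nra).
  assert (Hs : q - r < s < q + r) by (split; nra).
  split.
  - rewrite <- Hn. split; nra.
  - assert (4 * s * q * T ^ 2 < r ^ 2) by (pose proof (pow2_ge_0 (s - q)); lra).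
    assert (0 <= (4 * s - 3 * q) * (q * T ^ 2)) by (apply Rmult_le_pos; nra).
    assert (HqT : 3 * (q * T) ^ 2 < r ^ 2) by nra.
    assert (Hqd : (2 * q * d) ^ 2 < r ^ 2).
    { assert (4 / 3 * (q * d) <= q * T) by nra.
      assert (0 <= q * d) by nra.
      nra. }
    assert (2 * q * d < r) by nra.
    apply Rle_div_r; lra.
Qed.

Lemma close_of_system_large (rho beta : R) (n : nat) : 4 * r <= rho ->
  system alpha r (rho ^ 2) beta n -> Cmod (Cminus (Xpt alpha n) (polar rho beta)) < 6 * r.
Proof.
  intros Hrho Hsys.
  pose proof (Cmod_Xpt_sub_polar_sqr alpha rho beta n) as Hdist.
  pose proof (Cmod_ge_0 (Cminus (Xpt alpha n) (polar rho beta))).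
  pose proof (sqrt_pos (INR n)). pose proof (pow2_sqrt _ (pos_INR n)) as Hn.
  pose proof (dist_int_bound (INR n * alpha - beta)) as Hd.
  pose proof (sin_PI_mul_lower _ Hd) as Hsin_lo.
  pose proof (sin_PI_mul_upper _ (proj1 Hd)) as Hsin_up.
  unfold system in Hsys. rewrite sqrt_pow2 in Hsys by lra.
  destruct Hsys as [[Hn_lo Hn_up] Hd_up].
  set (s := sqrt (INR n)) in *. set (d := dist_int (INR n * alpha - beta)) in *.
  set (T := sin (PI * d)) in *.
  rewrite <- Hn in Hn_lo, Hn_up.
  apply Rle_div_r in Hd_up; [|lra].
  assert (s - rho <= 3 * r) by nra.
  assert (rho - s <= 3 * r) by nra.
  assert (Hs : (s - rho) ^ 2 <= 9 * r ^ 2) by nra.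
  assert (HTrho : 0 <= T * rho <= 2 * r) by (split; nra).
  assert (Hs_up : s <= 4 / 3 * rho) by nra.
  assert ((T * rho) ^ 2 <= 4 * r ^ 2) by nra.
  assert (0 <= (4 / 3 * rho - s) * (rho * T ^ 2)) by (apply Rmult_le_pos; nra).
  assert (Hdist_sqr : Cmod (Cminus (Xpt alpha n) (polar rho beta)) ^ 2 < (6 * r) ^ 2) by nra.
  nra.
Qed.

Lemma close_of_system_small (rho beta : R) (n : nat) : 0 <= rho < 4 * r ->
  system alpha r ((4 * r) ^ 2) beta n -> Cmod (Cminus (Xpt alpha n) (polar rho beta)) < 6 * r.
Proof.
  intros Hrho Hsys.
  pose proof (Cmod_Xpt_sub_polar_sqr alpha rho beta n) as Hdist.
  pose proof (Cmod_ge_0 (Cminus (Xpt alpha n) (polar rho beta))).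
  pose proof (sqrt_pos (INR n)). pose proof (pow2_sqrt _ (pos_INR n)) as Hn.
  pose proof (dist_int_bound (INR n * alpha - beta)) as Hd.
  pose proof (sin_PI_mul_lower _ Hd) as Hsin_lo.
  pose proof (sin_PI_mul_upper _ (proj1 Hd)) as Hsin_up.
  unfold system in Hsys. rewrite sqrt_pow2 in Hsys by lra.
  destruct Hsys as [[_ Hn_up] Hd_up].
  set (s := sqrt (INR n)) in *. set (d := dist_int (INR n * alpha - beta)) in *.
  set (T := sin (PI * d)) in *.
  rewrite <- Hn in Hn_up.
  replace (r / (2 * (4 * r))) with (1 / 8) in Hd_up by (field; lra).
  assert (HT : 4 * T ^ 2 <= 1) by nra.
  assert (Hs : s ^ 2 <= 28 * r ^ 2) by nra.
  (* as 4 T^2 <= 1, the squared distance is at most s^2 - s rho + rho^2 <= max (s^2, rho^2) *)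
  assert (0 <= (s * rho) * (1 - 4 * T ^ 2)) by (apply Rmult_le_pos; nra).
  assert (s ^ 2 - s * rho + rho ^ 2 < 36 * r ^ 2) by (destruct (Rle_lt_dec rho s); nra).
  assert (Hdist_sqr : Cmod (Cminus (Xpt alpha n) (polar rho beta)) ^ 2 < (6 * r) ^ 2) by nra.
  nra.
Qed.

End Directions.

Theorem lemma6 (alpha r : R) (Halpha : 0 <= alpha < 1) (Hr : 1 / 2 < r) :
  (rel_dense (Xset alpha) r ->
     forall m beta : R, 16 * r ^ 2 <= m -> 0 <= beta < 1 ->
       exists n : nat, (1 <= n)%nat /\ system alpha r m beta n) /\
  ((forall m beta : R, 16 * r ^ 2 <= m -> 0 <= beta < 1 ->
       exists n : nat, (1 <= n)%nat /\ system alpha r m beta n) ->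
     rel_dense (Xset alpha) (6 * r)).
Proof.
  assert (r_gt0 : 0 < r) by lra.
  split.
  - intros Hdense m beta Hm _.
    assert (Hm_sqr : m = sqrt m ^ 2) by (symmetry; apply pow2_sqrt; nra).
    assert (Hq : 4 * r <= sqrt m).
    { rewrite <- (sqrt_pow2 (4 * r)) by lra. apply sqrt_le_1_alt. lra. }
    destruct (Hdense (polar (sqrt m) beta)) as [y [[n [Hn ->]] Hclose]].
    exists n. split; [exact Hn|].
    rewrite Hm_sqr. exact (system_of_close alpha r r_gt0 _ _ _ Hq Hclose).
  - intros Hsolvable x.
    destruct (polar_decomposition x) as [beta [Hbeta Hx]].
    pose proof (Cmod_ge_0 x) as Hrho.
    destruct (Rle_lt_dec (4 * r) (Cmod x)) as [Hlarge|Hsmall].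
    + destruct (Hsolvable (Cmod x ^ 2) beta ltac:(nra) Hbeta) as [n [Hn Hsys]].
      exists (Xpt alpha n). split; [exists n; split; [exact Hn|reflexivity]|].
      rewrite Hx. exact (close_of_system_large alpha r r_gt0 _ _ _ Hlarge Hsys).
    + destruct (Hsolvable ((4 * r) ^ 2) beta ltac:(lra) Hbeta) as [n [Hn Hsys]].
      exists (Xpt alpha n). split; [exists n; split; [exact Hn|reflexivity]|].
      rewrite Hx. exact (close_of_system_small alpha r r_gt0 _ _ _ (conj Hrho Hsmall) Hsys).
Qed.
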